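(* $$\liminf_{n\to\infty}\frac{a(n)}{n}=\frac{\varphi+2}{5}\qquad\text{and}\qquad \limsup_{n\to\infty}\frac{a(n)}{n}=\varphi .$$
   Context: $\varphi=(1+\sqrt5)/2$. Let $(F_n)_{n\ge 0}$ be the Fibonacci numbers: $F_0=0$, $F_1=1$, $F_n=F_{n-1}+F_{n-2}$ for $n\ge 2$. Define $(a(n))_{n\ge 0}$ (OEIS A105774) by $a(0)=0$, $a(1)=1$, and for $n\ge 2$, $a(n)=F_{j+1}-a(n-F_j)$, where $j\ge 2$ is the unique index with $F_j<n\le F_{j+1}$. *)

From Stdlib Require Import Reals ZArith Arith.
From Coquelicot Require Import Coquelicot.
Open Scope R_scope.

Fixpoint fib (n : nat) : nat :=
  match n with
  | O => O
  | S m => match m with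
           | O => 1%nat
           | S k => (fib m + fib k)%nat
           end
  end.

Definition phi : R := (1 + sqrt 5) / 2.

Definition is_A105774 (a : nat -> Z) : Prop :=
  a 0%nat = 0%Z /\ a 1%nat = 1%Z /\
  forall (n j : nat), (2 <= j)%nat -> (fib j < n <= fib (j + 1))%nat ->
    a n = (Z.of_nat (fib (j + 1)) - a (n - fib j)%nat)%Z.

(* Write F_j < n <= F_(j+1).  Unfolding the recursion twice gives
   a(n) = F_(j+1) - F_(i+1) + a(n - F_j - F_i) with i + 2 <= j, and since
   F_(j+2)/(F_(j+2) + F_j) tends to (phi + 1)/(phi + 2) = (phi + 2)/5, strong induction
   yields a(n) >= ((phi + 2)/5 - eps) n - C for every eps > 0.  One more unfolding gives
   a(n) <= F_(j+1) + C <= phi n + C'.  Both bounds are sharp, along n = F_k and along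
   n = F_k + 1 respectively. *)

From Stdlib Require Import Reals ZArith Arith Lia Lra Psatz.
From Coquelicot Require Import Coquelicot.
Open Scope R_scope.

Lemma Rabs_lt_mult_INR_eventually (eps C : R) :
  0 < eps -> exists N, forall n, (N <= n)%nat -> Rabs C < eps * INR n.
Proof.
  intros Heps.
  destruct (INR_unbounded (Rabs C / eps)) as [N HN].
  exists N; intros n Hn.
  apply le_INR in Hn.
  replace (Rabs C) with (eps * (Rabs C / eps)) by (field; lra).
  apply Rmult_lt_compat_l; lra.
Qed.

Lemma is_LimInf_seq_ratio (x : nat -> R) (l : R) :
  (forall eps, 0 < eps -> exists C, forall n, (l - eps) * INR n - C <= x n) ->
  (forall eps, 0 < eps -> exists C, forall N,
     exists n, (N <= n)%nat /\ x n <= (l + eps) * INR n + C) ->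
  is_LimInf_seq (fun n => x n / INR n) (Finite l).
Proof.
  intros Hlow Hfreq [eps Heps]; simpl; split.
  - intros N.
    destruct (Hfreq (eps / 2) ltac:(lra)) as [C HC].
    destruct (Rabs_lt_mult_INR_eventually (eps / 2) C ltac:(lra)) as [M HM].
    destruct (HC (max N M)) as [n [Hn Hx]].
    exists n; split; [lia|].
    specialize (HM n ltac:(lia)).
    pose proof (Rle_abs C); pose proof (Rabs_pos C).
    apply Rlt_div_l; nra.
  - destruct (Hlow (eps / 2) ltac:(lra)) as [C HC].
    destruct (Rabs_lt_mult_INR_eventually (eps / 2) C ltac:(lra)) as [N HN].
    exists N; intros n Hn.
    specialize (HN n Hn); specialize (HC n).
    pose proof (Rle_abs C); pose proof (Rabs_pos C).
    apply Rlt_div_r; nra.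
Qed.

Lemma is_LimSup_seq_ratio (x : nat -> R) (l : R) :
  (forall eps, 0 < eps -> exists C, forall n, x n <= (l + eps) * INR n + C) ->
  (forall eps, 0 < eps -> exists C, forall N,
     exists n, (N <= n)%nat /\ (l - eps) * INR n - C <= x n) ->
  is_LimSup_seq (fun n => x n / INR n) (Finite l).
Proof.
  intros Hup Hfreq.
  apply is_LimInf_opp_LimSup_seq.
  apply is_LimInf_seq_ext with (fun n => - x n / INR n).
  { intros n; unfold Rdiv; ring. }
  apply is_LimInf_seq_ratio.
  - intros eps Heps; destruct (Hup eps Heps) as [C HC].
    exists C; intros n; specialize (HC n); lra.
  - intros eps Heps; destruct (Hfreq eps Heps) as [C HC].
    exists C; intros N; destruct (HC N) as [n [Hn Hx]].
    exists n; split; [exact Hn | lra].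
Qed.

Lemma finite_lower_bound (f : nat -> R) (N : nat) :
  exists B, forall n, (n <= N)%nat -> B <= f n.
Proof.
  induction N as [|N [B HB]].
  - exists (f 0%nat); intros n Hn.
    replace n with 0%nat by lia; lra.
  - exists (Rmin B (f (S N))); intros n Hn.
    destruct (Nat.eq_dec n (S N)) as [->|Hne]; [apply Rmin_r|].
    apply Rle_trans with B; [apply Rmin_l | apply HB; lia].
Qed.

Lemma fib_SS n : fib (S (S n)) = (fib (S n) + fib n)%nat.
Proof. reflexivity. Qed.

Lemma fib_add1 j : (1 <= j)%nat -> fib (j + 1) = (fib j + fib (j - 1))%nat.
Proof.
  intros Hj; destruct j as [|j]; [lia|].
  replace (S j + 1)%nat with (S (S j)) by lia.
  now replace (S j - 1)%nat with j by lia.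
Qed.

Lemma fib_le_succ n : (fib n <= fib (S n))%nat.
Proof. destruct n; [simpl; lia | rewrite fib_SS; lia]. Qed.

Lemma fib_mono m n : (m <= n)%nat -> (fib m <= fib n)%nat.
Proof. induction 1; [lia | pose proof (fib_le_succ m0); lia]. Qed.

Lemma fib_gt0 n : (1 <= n)%nat -> (1 <= fib n)%nat.
Proof.
  intros Hn; destruct n as [|n]; [lia|].
  induction n; [simpl; lia | rewrite fib_SS; lia].
Qed.

Lemma fib_ge_id n : (n <= fib (S n))%nat.
Proof.
  induction n as [n IH] using lt_wf_ind.
  destruct n as [|[|n]]; [simpl; lia | simpl; lia|].
  rewrite fib_SS.
  pose proof (IH (S n) ltac:(lia)); pose proof (fib_gt0 (S n) ltac:(lia)); lia.
Qed.

Lemma fib_bracket n : (2 <= n)%nat ->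
  exists j, (2 <= j)%nat /\ (fib j < n <= fib (j + 1))%nat.
Proof.
  induction n as [|n IH]; intros Hn; [lia|].
  destruct (Nat.eq_dec n 1) as [->|Hn1]; [exists 2%nat; simpl; lia|].
  destruct (IH ltac:(lia)) as [j [Hj Hnj]].
  destruct (Nat.eq_dec n (fib (j + 1))) as [Hnf|Hnf]; [|exists j; lia].
  exists (j + 1)%nat; split; [lia|].
  rewrite (fib_add1 (j + 1)) by lia.
  replace (j + 1 - 1)%nat with j by lia.
  pose proof (fib_gt0 j ltac:(lia)); lia.
Qed.

Lemma phi_sqr : phi * phi = phi + 1.
Proof. unfold phi; pose proof (sqrt_sqrt 5 ltac:(lra)); nra. Qed.

Lemma phi_bounds : 1.6 < phi < 1.65.
Proof.
  unfold phi; pose proof (sqrt_sqrt 5 ltac:(lra)); pose proof (sqrt_pos 5).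
  split; nra.
Qed.

Lemma fib_succ_sub_phi n : INR (fib (S n)) - phi * INR (fib n) = (1 - phi) ^ n.
Proof.
  induction n as [|n IH]; [simpl; lra|].
  rewrite fib_SS, plus_INR, <- tech_pow_Rmult, <- IH.
  assert (E : (phi * phi - phi - 1) * INR (fib n) = 0) by (rewrite phi_sqr; ring).
  lra.
Qed.

Lemma fib_succ_phi_approx n : -1 <= INR (fib (S n)) - phi * INR (fib n) <= 1.
Proof.
  rewrite fib_succ_sub_phi.
  assert (Habs : Rabs (1 - phi) <= 1)
    by (pose proof phi_bounds; unfold Rabs; destruct Rcase_abs; lra).
  apply Rabs_le_between, Rle_trans with (1 ^ n); [|rewrite pow1; lra].
  rewrite <- RPow_abs; apply pow_incr; split; [apply Rabs_pos | exact Habs].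
Qed.

Lemma fib_SS_phi_approx n :
  -3 <= INR (fib (S (S n))) - (phi + 1) * INR (fib n) <= 3.
Proof.
  pose proof (fib_succ_phi_approx n); pose proof (fib_succ_phi_approx (S n)).
  pose proof phi_bounds; pose proof (pos_INR (fib n)).
  rewrite fib_SS, plus_INR in *; nra.
Qed.

Lemma phi_add2_sqr_div5 : (phi + 2) / 5 * (phi + 2) = phi + 1.
Proof. pose proof phi_sqr; nra. Qed.

Lemma fib_ratio_eventually eps : 0 < eps ->
  exists j0, (1 <= j0)%nat /\ forall j i, (j0 <= j)%nat -> (i + 2 <= j)%nat ->
    ((phi + 2) / 5 - eps) * (INR (fib j) + INR (fib i)) <= INR (fib j).
Proof.
  intros Heps.
  destruct (INR_unbounded (/ eps)) as [K HK].
  exists (K + 3)%nat; split; [lia|]; intros j i Hj Hij.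
  replace j with (S (S (j - 2))) by lia; set (k := (j - 2)%nat).
  assert (Hfk : 1 < eps * INR (fib k)).
  { apply Rmult_lt_reg_l with (/ eps); [now apply Rinv_0_lt_compat|].
    rewrite <- Rmult_assoc, Rinv_l, Rmult_1_l, Rmult_1_r by lra.
    apply Rlt_le_trans with (INR K); [exact HK|].
    apply le_INR; pose proof (fib_ge_id K); pose proof (fib_mono (S K) k); lia. }
  assert (Hik : INR (fib i) <= INR (fib k)) by (apply le_INR, fib_mono; lia).
  pose proof (fib_SS_phi_approx k); pose proof phi_add2_sqr_div5; pose proof phi_bounds.
  pose proof (pos_INR (fib i)); pose proof (pos_INR (fib (S (S k)))).
  destruct (Rle_lt_dec ((phi + 2) / 5) eps); nra.
Qed.

Section A105774.

Variable a : nat -> Z.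
Hypothesis ha : is_A105774 a.

Lemma a_0 : IZR (a 0%nat) = 0.
Proof. now destruct ha as [-> _]. Qed.

Lemma a_1 : IZR (a 1%nat) = 1.
Proof. now destruct ha as [_ [-> _]]. Qed.

Lemma a_rec n j : (2 <= j)%nat -> (fib j < n <= fib (j + 1))%nat ->
  IZR (a n) = INR (fib (j + 1)) - IZR (a (n - fib j)%nat).
Proof.
  intros Hj Hn; destruct ha as [_ [_ Hrec]].
  now rewrite (Hrec n j Hj Hn), minus_IZR, <- INR_IZR_INZ.
Qed.

Lemma a_rec2 n j i : (2 <= j)%nat -> (fib j < n <= fib (j + 1))%nat ->
  (2 <= i)%nat -> (fib i < n - fib j <= fib (i + 1))%nat ->
  (i + 2 <= j)%nat /\
  IZR (a n) = INR (fib (j + 1)) - INR (fib (i + 1)) + IZR (a (n - fib j - fib i)%nat).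
Proof.
  intros Hj Hn Hi Hm; split.
  - destruct (Nat.le_gt_cases (i + 2) j) as [Hij|Hij]; [exact Hij|].
    pose proof (fib_add1 j ltac:(lia)); pose proof (fib_mono (j - 1) i ltac:(lia)); lia.
  - rewrite (a_rec n j Hj Hn), (a_rec _ i Hi Hm); ring.
Qed.

Lemma a_fib_SS k : (1 <= k)%nat ->
  IZR (a (fib (S (S k)))) = INR (fib (S (S k))) - IZR (a (fib k)).
Proof.
  intros Hk; pose proof (fib_gt0 k Hk).
  assert (Hs : fib (S k + 1) = (fib (S k) + fib k)%nat)
    by (rewrite fib_add1 by lia; do 2 f_equal; lia).
  replace (fib (S (S k))) with (fib (S k + 1)) by (f_equal; lia).
  rewrite (a_rec _ (S k)) by lia.
  rewrite Hs; now replace (fib (S k) + fib k - fib (S k))%nat with (fib k) by lia.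
Qed.

Lemma a_fib_add1 k : (2 <= k)%nat -> IZR (a (fib k + 1)%nat) = INR (fib (k + 1)) - 1.
Proof.
  intros Hk; pose proof (fib_add1 k ltac:(lia)); pose proof (fib_gt0 (k - 1) ltac:(lia)).
  rewrite (a_rec _ k Hk) by lia.
  now replace (fib k + 1 - fib k)%nat with 1%nat by lia; rewrite a_1.
Qed.

Lemma a_lower_bound eps : 0 < eps ->
  exists C, forall n, ((phi + 2) / 5 - eps) * INR n - C <= IZR (a n).
Proof.
  intros Heps; set (l := (phi + 2) / 5 - eps).
  destruct (fib_ratio_eventually eps Heps) as [j0 [Hj0 Hratio]].
  destruct (finite_lower_bound (fun n => IZR (a n) - l * INR n) (fib j0)) as [B HB].
  exists (Rmax 2 (- B)).
  pose proof (Rmax_l 2 (- B)); pose proof (Rmax_r 2 (- B)); pose proof phi_bounds.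
  intros n; induction n as [n IH] using lt_wf_ind.
  destruct (Nat.le_gt_cases n (fib j0)) as [Hsmall|Hlarge]; [specialize (HB n Hsmall); lra|].
  pose proof (fib_gt0 j0 Hj0).
  destruct (fib_bracket n ltac:(lia)) as [j [Hj Hnj]].
  assert (Hjj0 : (j0 <= j)%nat)
    by (destruct (Nat.le_gt_cases j0 j); [lia | pose proof (fib_mono (j + 1) j0); lia]).
  assert (Hn : INR n = INR (fib j) + INR (n - fib j)) by (rewrite <- plus_INR; f_equal; lia).
  assert (Hfj : INR (fib j) <= INR (fib (j + 1))) by (apply le_INR, fib_mono; lia).
  destruct (Nat.eq_dec (n - fib j) 1) as [Hm1|Hm1].
  - rewrite (a_rec n j Hj Hnj), Hn, Hm1, a_1; change (INR 1) with 1.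
    pose proof (pos_INR (fib j)); unfold l; nra.
  - destruct (fib_bracket (n - fib j) ltac:(lia)) as [i [Hi Hmi]].
    destruct (a_rec2 n j i Hj Hnj Hi Hmi) as [Hij ->].
    pose proof (fib_gt0 i ltac:(lia)).
    specialize (IH (n - fib j - fib i)%nat ltac:(lia)).
    assert (Hm : INR (n - fib j) = INR (fib i) + INR (n - fib j - fib i))
      by (rewrite <- plus_INR; f_equal; lia).
    specialize (Hratio j i Hjj0 Hij); fold l in Hratio.
    pose proof (fib_add1 j ltac:(lia)) as Hfj1; apply (f_equal INR) in Hfj1.
    rewrite plus_INR in Hfj1.
    assert (INR (fib (i + 1)) <= INR (fib (j - 1))) by (apply le_INR, fib_mono; lia).
    nra.
Qed.

Lemma a_upper_bound : exists D, forall n, IZR (a n) <= phi * INR n + D.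
Proof.
  pose proof phi_bounds.
  destruct (a_lower_bound ((phi + 2) / 5) ltac:(lra)) as [C HC].
  exists (2 + Rabs C); pose proof (Rle_abs C); pose proof (Rabs_pos C).
  intros n; destruct (Nat.lt_ge_cases n 2) as [Hn|Hn].
  { pose proof (pos_INR n).
    destruct n as [|[|n]]; [rewrite a_0 | rewrite a_1 | lia]; simpl INR; nra. }
  destruct (fib_bracket n Hn) as [j [Hj Hnj]].
  rewrite (a_rec n j Hj Hnj).
  specialize (HC (n - fib j)%nat); rewrite Rminus_diag, Rmult_0_l in HC.
  pose proof (fib_succ_phi_approx j); replace (S j) with (j + 1)%nat in * by lia.
  assert (phi * INR (fib j) <= phi * INR n)
    by (apply Rmult_le_compat_l; [lra | apply le_INR; lia]).
  lra.
Qed.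

Lemma a_is_LimInf_ratio :
  is_LimInf_seq (fun n => IZR (a n) / INR n) (Finite ((phi + 2) / 5)).
Proof.
  apply is_LimInf_seq_ratio; [exact a_lower_bound|].
  intros eps Heps; destruct (a_lower_bound eps Heps) as [C HC].
  exists (C + 3); intros N.
  exists (fib (S (S (S N)))); split; [pose proof (fib_ge_id (S (S N))); lia|].
  rewrite (a_fib_SS (S N)) by lia.
  specialize (HC (fib (S N))).
  pose proof (fib_SS_phi_approx (S N)); pose proof phi_add2_sqr_div5; pose proof phi_bounds.
  assert (INR (fib (S N)) <= INR (fib (S (S (S N)))))
    by (apply le_INR, fib_mono; lia).
  pose proof (pos_INR (fib (S N))); nra.
Qed.

Lemma a_is_LimSup_ratio : is_LimSup_seq (fun n => IZR (a n) / INR n) (Finite phi).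
Proof.
  pose proof phi_bounds.
  apply is_LimSup_seq_ratio.
  - destruct a_upper_bound as [D HD].
    intros eps Heps; exists D; intros n.
    specialize (HD n); pose proof (pos_INR n); nra.
  - intros eps Heps; exists 4; intros N.
    exists (fib (S (S N)) + 1)%nat; split; [pose proof (fib_ge_id (S N)); lia|].
    rewrite (a_fib_add1 (S (S N))), plus_INR by lia.
    pose proof (fib_succ_phi_approx (S (S N))); replace (S (S (S N))) with (S (S N) + 1)%nat in * by lia.
    pose proof (pos_INR (fib (S (S N)))); change (INR 1) with 1; nra.
Qed.

End A105774.

Theorem proposition7 (a : nat -> Z) (ha : is_A105774 a) :
  LimInf_seq (fun n : nat => IZR (a n) / INR n) = Finite ((phi + 2) / 5) /\
  LimSup_seq (fun n : nat => IZR (a n) / INR n) = Finite phi.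
Proof.
  split.
  - apply is_LimInf_seq_unique, a_is_LimInf_ratio, ha.
  - apply is_LimSup_seq_unique, a_is_LimSup_ratio, ha.
Qed.
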